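(* Fix a risk level $\beta>0$ and a transient MDP with a sink state as described in the context (in particular $\mu>0$ componentwise). Suppose that $\bm{w}^{\infty,\star}>-\bm{\infty}$, i.e. every component of $\bm{w}^{\infty,\star}$ is finite. Then there exists a stationary deterministic policy $\pi^\star=(\bm d^\star)_\infty\in\Pi_{\mathrm{SD}}$ such that \[ \bm{w}^{\infty,\star}=\bm{w}^{\infty}(\pi^\star)=L^{\bm d^\star}\bm{w}^{\infty,\star}, \] and $\bm{w}^{\infty,\star}$ is the unique vector satisfying this equation.
   Context: MDP: states $\bar{\mathcal S}=\{1,\dots,S,S+1\}$, with $e:=S+1$ a sink state and $\mathcal S=\{1,\dots,S\}$ the non-sink states; finite actions $\mathcal A=\{1,\dots,A\}$; transition probabilities $\bar p(s,a,s')$; real rewards $\bar r(s,a,s')$ of arbitrary sign (written $p,r$ below); $\bar p(e,a,e)=1$, $\bar r(e,a,e)=0$ for all $a$; initial distribution $\bar\mu$ with $\bar\mu_e=0$ and its restriction $\mu$ to $\mathcal S$ satisfies $\mu>0$. Policies: $\Pi_{\mathrm{HR}}$ history-dependent randomized; $\Pi_{\mathrm{MR}}$ / $\Pi_{\mathrm{MD}}$ Markov randomized / deterministic (sequences of decision rules $\bm d_k:\mathcal S\to\Delta(\mathcal A)$); $\Pi_{\mathrm{SR}}$ / $\Pi_{\mathrm{SD}}$ stationary randomized / deterministic, $\pi=(\bm d)_\infty=(\bm d,\bm d,\dots)$; $\mathcal D=(\Delta(\mathcal A))^{\mathcal S}$ the set of decision rules, $d_a(s)$ the probability of $a$ in $s$.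 Transience (standing assumption): for every $\pi\in\Pi_{\mathrm{SD}}$, $\sum_{t=0}^\infty \mathbb P^{\pi,s}[\tilde s_t=s']<\infty$ for all $s,s'\in\mathcal S$. Entropic risk measure: $\mathrm{ERM}_\beta[\tilde x]=-\beta^{-1}\log\mathbb E[e^{-\beta\tilde x}]$. For $t\in\mathbb N$, $\pi\in\Pi_{\mathrm{MD}}$, $s\in\mathcal S$: $v^t_s(\pi)=\mathrm{ERM}^{\pi,s}_\beta[\sum_{k=0}^{t-1}r(\tilde s_k,\tilde a_k,\tilde s_{k+1})]$ (process started at $s$ following $\pi$), $v^{t,\star}_s=\max_{\pi\in\Pi_{\mathrm{MD}}}v^t_s(\pi)$; exponential value functions $w^t_s(\pi)=-\exp(-\beta v^t_s(\pi))$, $w^{t,\star}_s=-\exp(-\beta v^{t,\star}_s)$; $\bm w^\infty(\pi)=\liminf_{t\to\infty}\bm w^t(\pi)$, $\bm w^{\infty,\star}=\liminf_{t\to\infty}\bm w^{t,\star}$ (componentwise). For $\bm d\in\mathcal D$ define $\bm B^{\bm d}\in\mathbb R_+^{S\times S}$, $\bm b^{\bm d}\in\mathbb R_+^S$ by $B^{\bm d}_{s,s'}=\sum_a p(s,a,s')d_a(s)e^{-\beta r(s,a,s')}$, $b^{\bm d}_s=\sum_a p(s,a,e)d_a(s)e^{-\beta r(s,a,e)}$ for $s,s'\in\mathcal S$. Exponential Bellman operators on $\mathbb R^S$: $L^{\bm d}\bm w=\bm B^{\bm d}\bm w-\bm b^{\bm d}$ and $L^\star\bm w=\max_{\bm d\in\mathcal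 D}L^{\bm d}\bm w$ (componentwise max). *)

From HB Require Import structures.
From mathcomp Require Import all_boot all_order all_algebra.
From mathcomp Require Import all_classical all_reals all_analysis.
Set Implicit Arguments. Unset Strict Implicit. Unset Printing Implicit Defensive.
Import Order.TTheory GRing.Theory Num.Theory.
Local Open Scope ring_scope.

(* States: [option S]; [None] is the sink state e, [Some s] the non-sink
   states.  The transition probabilities [p] and
   rewards [r] are given on non-sink origins; the sink is absorbing with
   reward 0 (hard-coded below, as in the context: p(e,a,e)=1, r(e,a,e)=0). *)
Section MDP.
Variables (R : realType) (S A : finType).
Variables (p r : S -> A -> option S -> R) (beta : R).

Definition pbar (d : S -> A) (s s' : option S) : R :=
  match s with
  | Some s0 => p s0 (d s0) s'
  | None => if s' is None then 1 else 0
  end.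

Definition rbar (d : S -> A) (s s' : option S) : R :=
  match s with
  | Some s0 => r s0 (d s0) s'
  | None => 0
  end.

Definition MDpolicy := nat -> S -> A.
Definition stationary (d : S -> A) : MDpolicy := fun _ => d.

(* Trajectory s_0 = s, s_1, ..., s_t, where x = (s_1,...,s_t). *)
Definition traj (s : S) {t : nat} (x : t.-tuple (option S)) (k : nat) : option S :=
  nth None (Some s :: (x : seq (option S))) k.

Definition path_prob (pi : MDpolicy) (s : S) (t : nat) (x : t.-tuple (option S)) : R :=
  \prod_(k < t) pbar (pi k) (traj s x k) (traj s x k.+1).

Definition path_ret (pi : MDpolicy) (s : S) (t : nat) (x : t.-tuple (option S)) : R :=
  \sum_(k < t) rbar (pi k) (traj s x k) (traj s x k.+1).

Definition expect (pi : MDpolicy) (s : S) (t : nat) (g : t.-tuple (option S) -> R) : R :=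
  \sum_(x : t.-tuple (option S)) path_prob pi s x * g x.

Definition ERM (pi : MDpolicy) (s : S) (t : nat) (X : t.-tuple (option S) -> R) : R :=
  - beta^-1 * ln (expect pi s (fun x => expR (- beta * X x))).

Definition vt (t : nat) (pi : MDpolicy) (s : S) : R := @ERM pi s t (@path_ret pi s t).
Definition vt_opt (t : nat) (s : S) : R := sup (range (fun pi : MDpolicy => vt t pi s)).

Definition wt (t : nat) (pi : MDpolicy) (s : S) : R := - expR (- beta * vt t pi s).
Definition wt_opt (t : nat) (s : S) : R := - expR (- beta * vt_opt t s).

Definition winf (pi : MDpolicy) (s : S) : \bar R := limn_einf (fun t => (wt t pi s)%:E).
Definition winf_opt (s : S) : \bar R := limn_einf (fun t => (wt_opt t s)%:E).

Definition occ (pi : MDpolicy) (s : S) (t : nat) (s' : S) : R :=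
  expect pi s (fun x : t.-tuple (option S) => (traj s x t == Some s')%:R).

Definition transient : Prop :=
  forall (d : S -> A) (s s' : S),
    (\sum_(0 <= t <oo) (occ (stationary d) s t s')%:E < +oo)%E.

(* Randomized decision rules d : S -> A -> R (d s a = d_a(s)). *)
Definition Bmat (d : S -> A -> R) (s s' : S) : R :=
  \sum_(a : A) p s a (Some s') * d s a * expR (- beta * r s a (Some s')).
Definition bvec (d : S -> A -> R) (s : S) : R :=
  \sum_(a : A) p s a None * d s a * expR (- beta * r s a None).
Definition Lop (d : S -> A -> R) (w : S -> R) (s : S) : R :=
  \sum_(s' : S) Bmat d s s' * w s' - bvec d s.

End MDP.

Definition det_rule (R : realType) (S A : finType) (d : S -> A) : S -> A -> R :=
  fun s a => (a == d s)%:R.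

(* With u = -w the exponential values are positive and the Bellman operators
   become monotone affine maps T^d u = b^d + B^d u with nonnegative data; the
   optimal one is T u = min_d T^d u.  The finite-horizon optimal values are the
   iterates T^t 1, while the iterates T^t 0 increase to the least fixed point l
   of T, the finiteness of w^{oo,*} bounding them.  A rule d* greedy for l
   satisfies l = b^{d*} + B^{d*} l.  Transience makes the sink reachable from
   every state under d*, so a power of B^{d*} is a strict contraction for the
   l-weighted sup-norm and (B^{d*})^t -> 0.  Hence both T^t 1, squeezed between
   T^t 0 and (T^{d*})^t 1, and (T^{d*})^t 1 converge to l, and l is the only
   fixed point of T^{d*}. *)

From HB Require Import structures.
From mathcomp Require Import all_boot all_order all_algebra.
From mathcomp Require Import all_classical all_reals all_analysis.
Import Order.TTheory GRing.Theory Num.Theory numFieldNormedType.Exports.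
Local Open Scope ring_scope.

Lemma sum_option (V : nmodType) (T : finType) (F : option T -> V) :
  \sum_(y : option T) F y = F None + \sum_(t : T) F (Some t).
Proof.
rewrite (bigD1 None) //=; congr (_ + _).
by rewrite (reindex_omap Some id) //=; [apply: eq_bigl => t; rewrite eqxx | case].
Qed.

Lemma sum_tuple_cons (V : nmodType) (T : finType) n (F : n.+1.-tuple T -> V) :
  \sum_(x : n.+1.-tuple T) F x = \sum_(y : T) \sum_(x : n.-tuple T) F [tuple of y :: x].
Proof.
rewrite pair_big /= (reindex (fun yx : T * n.-tuple T => [tuple of yx.1 :: yx.2])) //=.
exists (fun x : n.+1.-tuple T => (thead x, [tuple of behead x])).
  by case=> y x _ /=; congr pair; apply: val_inj.
by move=> x _; rewrite [in RHS](tuple_eta x); apply: val_inj.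
Qed.

Lemma wsum_gt0 (R : realDomainType) (I : finType) (q c : I -> R) :
  (forall i, 0 <= q i) -> 0 < \sum_i q i -> (forall i, 0 < c i) -> 0 < \sum_i q i * c i.
Proof.
move=> q0 /lt0r_neq0/eqP sq c0.
have [i /andP[_ qi]] := psumr_neq0P (fun i _ => q0 i) sq.
rewrite (bigD1 i) //= ltr_pwDl ?mulr_gt0 // sumr_ge0 // => j _.
exact: mulr_ge0 (q0 j) (ltW (c0 j)).
Qed.

Lemma sup_max (R : realType) (E : set R) x : E x -> ubound E x -> sup E = x.
Proof.
move=> Ex ubx; apply/eqP; rewrite eq_le ge_sup //=; last by exists x.
by apply: ub_le_sup => //; exists x.
Qed.

Lemma sum_det_rule (R : pzSemiRingType) (I : finType) (f g : I -> R) i :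
  \sum_j f j * (j == i)%:R * g j = f i * g i.
Proof.
by rewrite (bigD1 i) //= eqxx mulr1 big1 ?addr0 // => j /negbTE ->; rewrite mulr0 mul0r.
Qed.

Section LiminfEFin.
Context {R : realType}.
Local Open Scope classical_set_scope.

Lemma limn_einf_EFin (u : R^nat) l :
  u t @[t --> \oo] --> l -> limn_einf (fun t => (u t)%:E) = l%:E.
Proof. by move=> ul; apply: (cvg_limn_einf_sup _).1; apply: cvg_EFin => //; apply: nearW. Qed.

Lemma limn_einf_gtNy (u : R^nat) :
  (-oo < limn_einf (fun t => (u t)%:E))%E -> exists M, \forall t \near \oo, M <= u t.
Proof.
rewrite limn_einf_lim (cvg_lim _ (@cvg_einfs_sup _ _)) // => /ereal_sup_gt[_ [n _ <-]] gtNy.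
have lb k : (n <= k)%N -> (einfs (fun t => (u t)%:E) n <= (u k)%:E)%E.
  by move=> nk; apply: ereal_inf_lbound; exists k.
have lbn := lb n (leqnn n); move: gtNy lbn lb.
case: (einfs (fun t => (u t)%:E) n) => [c| |] //= _ _ lb.
by exists c, n => // k /= /lb; rewrite lee_fin.
Qed.

End LiminfEFin.

Section PathSum.
Context {R : realType} {T : finType}.
Implicit Types (M : nat -> T -> T -> R) (f g : T -> R).

Fixpoint path_sum t M f z : R :=
  if t is t'.+1 then \sum_y M 0%N z y * path_sum t' (fun k => M k.+1) f y else f z.

Lemma sum_path_prodE t M f (z d0 : T) :
  \sum_(x : t.-tuple T)
     (\prod_(k < t) M k (nth d0 (z :: x) k) (nth d0 (z :: x) k.+1)) * f (nth d0 (z :: x) t)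
  = path_sum t M f z.
Proof.
elim: t M z => [|t IH] M z /=.
  rewrite (big_pred1 [tuple]) ?big_ord0 ?mul1r // => x.
  by apply/eqP; rewrite [x]tuple0.
rewrite sum_tuple_cons; apply: eq_bigr => y _.
rewrite -(IH (fun k => M k.+1)) mulr_sumr; apply: eq_bigr => x _ /=.
by rewrite big_ord_recl mulrA.
Qed.

Lemma path_sum_ge0 t M f z :
  (forall k z y, 0 <= M k z y) -> (forall y, 0 <= f y) -> 0 <= path_sum t M f z.
Proof.
elim: t M z => [|t IH] M z M0 f0 //=.
by apply: sumr_ge0 => y _; rewrite mulr_ge0 ?IH.
Qed.

Lemma ler_path_sum t M f g z : (forall k z y, 0 <= M k z y) ->
  (forall y, f y <= g y) -> path_sum t M f z <= path_sum t M g z.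
Proof.
elim: t M z => [|t IH] M z M0 fg //=.
by apply: ler_sum => y _; rewrite ler_wpM2l ?IH.
Qed.

Lemma path_sum_sum (I : finType) t M (F : I -> T -> R) z :
  path_sum t M (fun y => \sum_i F i y) z = \sum_i path_sum t M (F i) z.
Proof.
elim: t M z => [|t IH] M z //=.
rewrite exchange_big; apply: eq_bigr => y _.
by rewrite IH mulr_sumr.
Qed.

End PathSum.

Section ExpBellman.
Context {R : realType} {S A : finType}.
(* [K s a y] weighs the move from [s] to [y] under [a], [None] being the sink,
   whose value is normalised to 1: [Tpol d u s = \sum_y K s (d s) y * u y]
   with [u None = 1]. *)
Variable K : S -> A -> option S -> R.
Hypothesis K_ge0 : forall s a y, 0 <= K s a y.
Implicit Types (d : S -> A) (u v : S -> R).

Definition bexit d s := K s (d s) None.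
Definition Bop d u s := \sum_s' K s (d s) (Some s') * u s'.
Definition Bpow d k := iter k (Bop d).
Definition Tpol d u s := bexit d s + Bop d u s.

Lemma bexit_ge0 d s : 0 <= bexit d s.
Proof. exact: K_ge0. Qed.

Lemma Bop_ge0 d u : (forall s, 0 <= u s) -> forall s, 0 <= Bop d u s.
Proof. by move=> u0 s; apply: sumr_ge0 => s' _; rewrite mulr_ge0. Qed.

Lemma ler_Bop d u v : (forall s, u s <= v s) -> forall s, Bop d u s <= Bop d v s.
Proof. by move=> uv s; apply: ler_sum => s' _; rewrite ler_wpM2l. Qed.

Lemma BopD d u v : Bop d (u + v) = Bop d u + Bop d v.
Proof.
apply: funext => s; rewrite /Bop !fctE -big_split.
by apply: eq_bigr => s' _; rewrite mulrDr.
Qed.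

Lemma BopZ d a u : Bop d (a *: u) = a *: Bop d u.
Proof.
apply: funext => s; rewrite /Bop !fctE [RHS]/(_ *: _) /= mulr_sumr.
by apply: eq_bigr => s' _; rewrite mulrCA.
Qed.

Lemma BopN d u : Bop d (- u) = - Bop d u.
Proof. by rewrite -scaleN1r BopZ scaleN1r. Qed.

Lemma BopB d u v : Bop d (u - v) = Bop d u - Bop d v.
Proof. by rewrite BopD BopN. Qed.

Lemma Bpow_ge0 d k u : (forall s, 0 <= u s) -> forall s, 0 <= Bpow d k u s.
Proof. by move=> u0; elim: k => [|k IH] //=; apply: Bop_ge0. Qed.

Lemma ler_Bpow d k u v : (forall s, u s <= v s) -> forall s, Bpow d k u s <= Bpow d k v s.
Proof. by move=> uv; elim: k => [|k IH] //=; apply: ler_Bop. Qed.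

Lemma BpowD d k u v : Bpow d k (u + v) = Bpow d k u + Bpow d k v.
Proof. by elim: k => [|k IH] //=; rewrite IH BopD. Qed.

Lemma BpowZ d k a u : Bpow d k (a *: u) = a *: Bpow d k u.
Proof. by elim: k => [|k IH] //=; rewrite IH BopZ. Qed.

Lemma BpowSr d k u : Bpow d k.+1 u = Bpow d k (Bop d u).
Proof. exact: iterSr. Qed.

Lemma Bpow_add d k j u : Bpow d (k + j) u = Bpow d k (Bpow d j u).
Proof. exact: iterD. Qed.

Lemma ler_Tpol d u v : (forall s, u s <= v s) -> forall s, Tpol d u s <= Tpol d v s.
Proof. by move=> uv s; rewrite lerD2l ler_Bop. Qed.

Lemma Tpol_ge0 d u : (forall s, 0 <= u s) -> forall s, 0 <= Tpol d u s.
Proof. by move=> u0 s; rewrite addr_ge0 ?bexit_ge0 ?Bop_ge0. Qed.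

Lemma TpolB d u v : Tpol d u - Tpol d v = Bop d (u - v).
Proof. by rewrite BopB; apply: funext => s; rewrite !fctE /Tpol opprD addrACA subrr add0r. Qed.

Variable a0 : A.

Definition greedy u s : A := [arg min_(a < a0) Tpol (fun=> a) u s]%O.
Definition Topt u := Tpol (greedy u) u.

Lemma Topt_le d u s : Topt u s <= Tpol d u s.
Proof. by rewrite /Topt /Tpol /bexit /Bop /greedy; case: arg_minP => // a _; apply. Qed.

Lemma ler_Topt u v : (forall s, u s <= v s) -> forall s, Topt u s <= Topt v s.
Proof. by move=> uv s; apply: le_trans (Topt_le (greedy v) u s) _; apply: ler_Tpol. Qed.

Lemma Topt_ge0 u : (forall s, 0 <= u s) -> forall s, 0 <= Topt u s.
Proof. exact: Tpol_ge0. Qed.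

Lemma ler_iter_Topt t u v : (forall s, u s <= v s) ->
  forall s, iter t Topt u s <= iter t Topt v s.
Proof. by move=> uv; elim: t => [|t IH] //=; apply: ler_Topt. Qed.

Lemma iter_Topt_le_Tpol t d u s : iter t Topt u s <= iter t (Tpol d) u s.
Proof.
elim: t s => [|t IH] s //=.
by apply: le_trans (Topt_le d _ s) _; apply: ler_Tpol.
Qed.

Lemma Topt_addr_le u e s : 0 <= e ->
  Topt (fun s => u s + e) s <= Topt u s + e * \sum_a \sum_s' K s a (Some s').
Proof.
move=> e0; apply: le_trans (Topt_le (greedy u) _ s) _.
rewrite /Topt /Tpol /Bop -addrA lerD2l.
under eq_bigr do rewrite mulrDr.
rewrite big_split lerD2l -mulr_suml mulrC ler_wpM2l //.
by rewrite (bigD1 (greedy u s)) //= lerDl sumr_ge0 // => a _; rewrite sumr_ge0.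
Qed.

Local Open Scope classical_set_scope.

Definition lfp s : R := sup (range (fun t => iter t Topt 0 s)).

Lemma iter_Topt0_nondecreasing s : nondecreasing_seq (fun t => iter t Topt 0 s).
Proof.
apply/nondecreasing_seqP => t; elim: t s => [|t IH] s; first exact: Topt_ge0.
exact: ler_Topt.
Qed.

Lemma has_ubound_iter_Topt0 u s M : (forall s, 0 <= u s) ->
  (\forall t \near \oo, iter t Topt u s <= M) ->
  has_ubound (range (fun t => iter t Topt 0 s)).
Proof.
move=> u0 [n _ nM]; exists M => _ [t _ <-].
apply: le_trans (iter_Topt0_nondecreasing s _ _ (leq_addr n t)) _.
exact: le_trans (ler_iter_Topt (t + n) 0 u u0 s) (nM _ (leq_addl t n)).
Qed.

Section TransientRule.
Variables (d : S -> A) (l : S -> R).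
Hypothesis Tpol_l : Tpol d l = l.
Hypothesis l_ge0 : forall s, 0 <= l s.
Hypothesis reachable : forall s, exists k, 0 < Bpow d k (bexit d) s.

Lemma Bop_fix_le s : Bop d l s <= l s.
Proof. by rewrite -[leRHS](congr1 (@^~ s) Tpol_l) lerDr bexit_ge0. Qed.

Lemma Bpow_fix_le k s : Bpow d k l s <= l s.
Proof.
elim: k s => [|k IH] s //=.
exact: le_trans (ler_Bop _ _ _ IH s) (Bop_fix_le s).
Qed.

Lemma Bpow_bexit_le k s : Bpow d k (bexit d) s <= l s.
Proof.
apply: le_trans (Bpow_fix_le k s); apply: ler_Bpow => s'.
by rewrite -[leRHS](congr1 (@^~ s') Tpol_l) lerDl Bop_ge0.
Qed.

Lemma fix_gt0 s : 0 < l s.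
Proof. by have [k /lt_le_trans] := reachable s; apply; apply: Bpow_bexit_le. Qed.

Lemma fix_expand N : l = \sum_(k < N) Bpow d k (bexit d) + Bpow d N l.
Proof.
elim: N => [|N IH]; first by rewrite big_ord0 add0r.
rewrite big_ord_recr /= -addrA -[Bop d _]/(Bpow d N.+1 l) BpowSr -BpowD {1}IH.
by congr (_ + Bpow d N _); rewrite -[LHS]Tpol_l.
Qed.

(* [N] exceeds, for every state, a time at which the sink is reached with
   positive weight. *)
Lemma Bpow_contraction :
  exists N g, [/\ 0 <= g, g < 1 & forall s, Bpow d N l s <= g * l s].
Proof.
have [kf kfP] := choice reachable.
pose N := (\sum_s kf s).+1.
have lt_fix s : Bpow d N l s < l s.
  rewrite [ltRHS](congr1 (@^~ s) (fix_expand N)) fct_sumE ltrDr.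
  have kfN : (kf s < N)%N by rewrite ltnS (bigD1 s) //= leq_addr.
  rewrite (bigD1 (Ordinal kfN)) //= ltr_wpDr ?kfP // sumr_ge0 // => k _.
  exact/Bpow_ge0/bexit_ge0.
exists N, (\big[Num.max/0]_s (Bpow d N l s / l s)); split.
- exact: bigmax_ge_id.
- by apply: bigmax_lt => // s _; rewrite ltr_pdivrMr ?fix_gt0 // mul1r.
- by move=> s; rewrite -ler_pdivrMr ?fix_gt0 //; apply: le_bigmax.
Qed.

Lemma Bpow_fix_cvg0 s : Bpow d t l s @[t --> \oo] --> 0.
Proof.
have [N [g [g0 g1 Ng]]] := Bpow_contraction.
have geom m s' : Bpow d (N * m) l s' <= g ^+ m * l s'.
  elim: m s' => [|m IH] s'; first by rewrite muln0 mul1r.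
  rewrite mulnS Bpow_add exprSr -mulrA.
  apply: le_trans (ler_Bpow _ _ _ (g ^+ m *: l) IH s') _.
  by rewrite BpowZ fctE ler_wpM2l ?exprn_ge0.
apply/cvgrPdist_le => e e0.
have : g ^+ m * l s @[m --> \oo] --> 0.
  by rewrite -(mul0r (l s)); apply: cvgM (cvg_cst _); apply: cvg_expr; rewrite ger0_norm.
move=> /cvgrPdist_le/(_ _ e0)[M _ /(_ M (leqnn M))].
rewrite sub0r normrN ger0_norm ?mulr_ge0 ?exprn_ge0 ?l_ge0 // => gMe.
exists (N * M)%N => // t /= Mt.
rewrite sub0r normrN ger0_norm ?Bpow_ge0 //.
rewrite -(subnK Mt) addnC Bpow_add.
exact: le_trans (ler_Bpow _ _ _ _ (Bpow_fix_le _) s) (le_trans (geom M s) gMe).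
Qed.

Lemma Bpow_cvg0 y s : Bpow d t y s @[t --> \oo] --> 0.
Proof.
pose c := \sum_s' `|y s'| / l s'.
have yc s' : `|y s'| <= c * l s'.
  rewrite -ler_pdivrMr ?fix_gt0 // /c (bigD1 s') //= lerDl.
  by apply: sumr_ge0 => ? _; rewrite divr_ge0 ?l_ge0.
apply: (squeeze_cvgr (f := fun t => - (c * Bpow d t l s)) (h := fun t => c * Bpow d t l s)).
- apply: nearW => t; rewrite -mulNr.
  have scale a : a * Bpow d t l s = Bpow d t (a *: l) s by rewrite BpowZ.
  rewrite !scale; apply/andP; split; apply: ler_Bpow => s'; have := yc s'.
  + by rewrite ler_norml -mulNr => /andP[].
  + by rewrite ler_norml => /andP[].
- by rewrite -oppr0 -(mulr0 c); apply: cvgN; apply: cvgM (cvg_cst c) (Bpow_fix_cvg0 s).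
- by rewrite -(mulr0 c); apply: cvgM (cvg_cst c) (Bpow_fix_cvg0 s).
Qed.

Lemma iter_TpolB t u : iter t (Tpol d) u - l = Bpow d t (u - l).
Proof. by elim: t => [|t IH] //=; rewrite -[X in _ - X]Tpol_l TpolB IH. Qed.

Lemma iter_Tpol_cvg u s : iter t (Tpol d) u s @[t --> \oo] --> l s.
Proof.
have -> : (fun t => iter t (Tpol d) u s) = (fun t => l s + Bpow d t (u - l) s).
  by apply: funext => t; rewrite -iter_TpolB !fctE addrCA subrr addr0.
by rewrite -[X in _ --> X]addr0; apply: cvgD (cvg_cst _) (Bpow_cvg0 _ s).
Qed.

Lemma Tpol_fix_unique x : Tpol d x = x -> x = l.
Proof.
move=> Tpol_x; apply: funext => s; have := iter_Tpol_cvg x s.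
have -> : (fun t => iter t (Tpol d) x s) = cst (x s).
  by apply: funext => t; rewrite iter_fix.
by move/cvg_lim => <- //; rewrite lim_cst.
Qed.

End TransientRule.

Section LeastFixpoint.
Hypothesis iter_Topt0_bounded : forall s, has_ubound (range (fun t => iter t Topt 0 s)).

Lemma iter_Topt0_cvg s : iter t Topt 0 s @[t --> \oo] --> lfp s.
Proof. exact: nondecreasing_cvgn (iter_Topt0_nondecreasing s) (iter_Topt0_bounded s). Qed.

Lemma iter_Topt0_le_lfp t s : iter t Topt 0 s <= lfp s.
Proof.
apply: sup_upper_bound; last by exists t.
by split; [exists (iter 0 Topt 0 s), 0%N | exact: iter_Topt0_bounded].
Qed.

Lemma lfp_ge0 s : 0 <= lfp s.
Proof. exact: iter_Topt0_le_lfp 0%N s. Qed.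

Lemma Topt_lfp s : Topt lfp s = lfp s.
Proof.
apply/eqP; rewrite eq_le; apply/andP; split; last first.
  apply: ge_sup; first by exists (iter 0 Topt 0 s), 0%N.
  move=> _ [[|t] _ <-]; first exact: Topt_ge0 lfp_ge0 s.
  by apply: ler_Topt => s'; apply: iter_Topt0_le_lfp.
apply/ler_addgt0Pr => e e0.
pose k := \sum_a \sum_s' K s a (Some s').
have k0 : 0 <= k by rewrite sumr_ge0 // => a _; rewrite sumr_ge0.
have k1 : 0 < k + 1 by rewrite ltr_wpDl.
have de0 : 0 < e / (k + 1) by rewrite divr_gt0.
have [t _ /(_ t (leqnn t)) close] :
    \forall t \near \oo, forall s', lfp s' <= iter t Topt 0 s' + e / (k + 1).
  apply: filter_forall => s'; have /cvgrPdist_le/(_ _ de0) := iter_Topt0_cvg s'.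
  apply: filterS => t.
  by rewrite ger0_norm ?subr_ge0 ?iter_Topt0_le_lfp // lerBlDl addrC.
apply: le_trans (ler_Topt _ _ close s) _; apply: le_trans (Topt_addr_le _ _ _ (ltW de0)) _.
rewrite lerD ?(iter_Topt0_le_lfp t.+1) // mulrAC ler_pdivrMr //.
by rewrite ler_wpM2l ?(ltW e0) // lerDl.
Qed.

Hypothesis reachable : forall d s, exists k, 0 < Bpow d k (bexit d) s.

Lemma Tpol_greedy_lfp : Tpol (greedy lfp) lfp = lfp.
Proof. by apply: funext => s; apply: Topt_lfp. Qed.

Lemma iter_Tpol_greedy_cvg u s : iter t (Tpol (greedy lfp)) u s @[t --> \oo] --> lfp s.
Proof. exact: iter_Tpol_cvg _ _ Tpol_greedy_lfp lfp_ge0 (reachable _) u s. Qed.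

Lemma iter_Topt_cvg u s : (forall s, 0 <= u s) -> iter t Topt u s @[t --> \oo] --> lfp s.
Proof.
move=> u0; apply: (squeeze_cvgr _ (iter_Topt0_cvg s) (iter_Tpol_greedy_cvg u s)).
by apply: nearW => t; rewrite ler_iter_Topt ?iter_Topt_le_Tpol.
Qed.

Lemma Tpol_greedy_fix_unique x : Tpol (greedy lfp) x = x -> x = lfp.
Proof. exact: Tpol_fix_unique _ _ Tpol_greedy_lfp lfp_ge0 (reachable _) x. Qed.

End LeastFixpoint.

End ExpBellman.

Section MDP.
Context {R : realType} {S A : finType}.
Variables (p r : S -> A -> option S -> R) (beta : R).
Hypothesis beta_gt0 : 0 < beta.
Hypothesis p_ge0 : forall s a y, 0 <= p s a y.
Hypothesis p_sum1 : forall s a, \sum_y p s a y = 1.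

Definition pexp s a y := p s a y * expR (- beta * r s a y).

Lemma pexp_ge0 s a y : 0 <= pexp s a y.
Proof. by rewrite mulr_ge0 ?expR_ge0. Qed.

Lemma Tpol_pexp_gt0 d u : (forall s, 0 < u s) -> forall s, 0 < Tpol pexp d u s.
Proof.
move=> u0 s.
have -> : Tpol pexp d u s =
    \sum_y p s (d s) y * (expR (- beta * r s (d s) y) * if y is Some s' then u s' else 1).
  rewrite sum_option mulr1; congr (_ + _).
  by apply: eq_bigr => s' _; rewrite mulrA.
apply: wsum_gt0 => [//||[s'|]]; first by rewrite p_sum1.
- by rewrite mulr_gt0 ?expR_gt0.
- by rewrite mulr1 expR_gt0.
Qed.

Definition step_weight (pi : MDpolicy S A) k z y :=
  pbar p (pi k) z y * expR (- beta * rbar r (pi k) z y).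

Definition ret_mgf t pi s := path_sum t (step_weight pi) (cst 1) (Some s).

Lemma expect_exp_ret t pi s :
  expect p pi s (fun x : t.-tuple _ => expR (- beta * path_ret r pi s x)) = ret_mgf t pi s.
Proof.
rewrite /expect /ret_mgf -(sum_path_prodE _ _ _ _ None); apply: eq_bigr => x _.
by rewrite /path_prob /path_ret mulr_sumr expR_sum mulr1 -big_split.
Qed.

Lemma path_sum_sink t pi : path_sum t (step_weight pi) (cst 1) None = 1.
Proof.
elim: t pi => [//|t IH] pi /=; rewrite sum_option IH big1 ?addr0.
  by rewrite /step_weight /= mulr0 expR0 !mulr1.
by move=> s _; rewrite /step_weight /= !mul0r.
Qed.

Lemma ret_mgfS t pi s : ret_mgf t.+1 pi s = Tpol pexp (pi 0%N) (ret_mgf t (fun k => pi k.+1)) s.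
Proof. by rewrite /ret_mgf /= sum_option path_sum_sink mulr1. Qed.

Lemma ret_mgf_gt0 t pi s : 0 < ret_mgf t pi s.
Proof.
elim: t pi s => [|t IH] pi s; first exact: ltr01.
by rewrite ret_mgfS; apply: Tpol_pexp_gt0.
Qed.

Lemma expR_Nmul_ln x : 0 < x -> expR (- beta * (- beta^-1 * ln x)) = x.
Proof. by move=> x0; rewrite mulrA mulrNN mulfV ?gt_eqF // mul1r lnK. Qed.

Lemma vt_ret_mgf t pi s : vt p r beta t pi s = - beta^-1 * ln (ret_mgf t pi s).
Proof. by rewrite /vt /ERM expect_exp_ret. Qed.

Lemma wt_ret_mgf t pi s : wt p r beta t pi s = - ret_mgf t pi s.
Proof. by rewrite /wt vt_ret_mgf expR_Nmul_ln ?ret_mgf_gt0. Qed.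

Lemma ret_mgf_stationary d t : ret_mgf t (stationary d) = iter t (Tpol pexp d) (cst 1).
Proof. by elim: t => [|t IH]; apply: funext => s //=; rewrite ret_mgfS IH. Qed.

Section Optimality.
Variable a0 : A.
Local Notation Topt := (Topt pexp a0).

Lemma iter_Topt_le_ret_mgf t pi s : iter t Topt (cst 1) s <= ret_mgf t pi s.
Proof.
elim: t pi s => [//|t IH] pi s; rewrite ret_mgfS /=.
apply: le_trans (Topt_le _ _ (pi 0%N) _ s) _.
exact: ler_Tpol _ pexp_ge0 _ _ _ (IH _) s.
Qed.

Definition greedy_policy t : MDpolicy S A :=
  fun k => greedy pexp a0 (iter (t - k.+1) Topt (cst 1)).

Lemma ret_mgf_greedy_policy t : ret_mgf t (greedy_policy t) = iter t Topt (cst 1).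
Proof.
elim: t => [|t IH]; apply: funext => s //.
by rewrite ret_mgfS [in RHS]/= -IH /greedy_policy subSS subn0 IH.
Qed.

Lemma iter_Topt_gt0 t s : 0 < iter t Topt (cst 1) s.
Proof. by rewrite -ret_mgf_greedy_policy ret_mgf_gt0. Qed.

Lemma vt_opt_iter t s : vt_opt p r beta t s = - beta^-1 * ln (iter t Topt (cst 1) s).
Proof.
apply: sup_max => [|_ [pi _ <-]].
  by exists (greedy_policy t); rewrite // vt_ret_mgf ret_mgf_greedy_policy.
rewrite vt_ret_mgf ler_wnM2l ?oppr_le0 ?invr_ge0 ?(ltW beta_gt0) //.
by rewrite ler_ln ?posrE ?ret_mgf_gt0 ?iter_Topt_gt0 ?iter_Topt_le_ret_mgf.
Qed.

Lemma wt_opt_iter t s : wt_opt p r beta t s = - iter t Topt (cst 1) s.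
Proof.
by rewrite /wt_opt vt_opt_iter expR_Nmul_ln ?iter_Topt_gt0.
Qed.

End Optimality.

Section Reachability.
Variable d : S -> A.

Definition exit_free j := forall k, Bpow pexp d k (bexit pexp d) j = 0.

Definition exit_free_ind (y : option S) : R :=
  if y is Some j then `[< exit_free j >]%:R else 0.

Lemma pbar_ge0 z y : 0 <= pbar p d z y.
Proof. by case: z => [z|] //=; case: y. Qed.

Lemma occ_path_sum s t s' : occ p (stationary d) s t s' =
  path_sum t (fun=> pbar p d) (fun y => (y == Some s')%:R) (Some s).
Proof. by rewrite /occ /expect -(sum_path_prodE _ _ _ _ None). Qed.

Lemma exit_free_step j : exit_free j ->
  p j (d j) None = 0 /\ forall j', p j (d j) (Some j') != 0 -> exit_free j'.
Proof.
move=> fj; split.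
  by move: (fj 0%N) => /eqP; rewrite mulf_eq0 (gt_eqF (expR_gt0 _)) orbF => /eqP.
move=> j' pj' k; have /psumr_eq0P := fj k.+1.
have bexit_pexp_ge0 := bexit_ge0 _ pexp_ge0 d.
move=> /(_ (fun i _ => mulr_ge0 (pexp_ge0 _ _ _) (Bpow_ge0 _ pexp_ge0 _ k _ bexit_pexp_ge0 i))).
move=> /(_ j' isT) /eqP; rewrite mulf_eq0 mulf_eq0 (negbTE pj') (gt_eqF (expR_gt0 _)).
by move/eqP.
Qed.

Lemma path_sum_exit_free t j :
  exit_free j -> path_sum t (fun=> pbar p d) exit_free_ind (Some j) = 1.
Proof.
elim: t j => [|t IH] j fj /=; first by rewrite (asboolT fj).
have [pN pS] := exit_free_step _ fj.
rewrite -(p_sum1 j (d j)); apply: eq_bigr => -[j'|] _ /=; last by rewrite pN mul0r.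
by have [->|/pS/IH ->] := eqVneq (p j (d j) (Some j')) 0; rewrite ?mul0r ?mulr1.
Qed.

Lemma sum_occ_exit_free t j : exit_free j -> 1 <= \sum_s' occ p (stationary d) j t s'.
Proof.
move=> fj; under eq_bigr do rewrite occ_path_sum.
rewrite -path_sum_sum -[X in X <= _](path_sum_exit_free t _ fj).
apply: ler_path_sum => [k z y|[j'|]]; rewrite ?pbar_ge0 //=; last by rewrite big1.
rewrite (bigD1 j') //= eqxx big1 ?addr0; first by case: asboolP.
by move=> i /negbTE ij; rewrite (inj_eq Some_inj) eq_sym ij.
Qed.

Hypothesis transient_p : transient p.

Lemma occ_partial_sums_bounded j :
  exists C, forall N, \sum_(0 <= t < N) \sum_s' occ p (stationary d) j t s' <= C.
Proof.
exists (\sum_s' fine (\sum_(0 <= t <oo) (occ p (stationary d) j t s')%:E)%E) => N.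
rewrite exchange_big /=; apply: ler_sum => s' _.
have occ_ge0 t : 0 <= occ p (stationary d) j t s'.
  by rewrite occ_path_sum path_sum_ge0 // => *; rewrite ?pbar_ge0.
have series_ge0 : (0 <= \sum_(0 <= t <oo) (occ p (stationary d) j t s')%:E)%E.
  by apply: nneseries_ge0 => t _; rewrite lee_fin.
rewrite -lee_fin fineK ?ge0_fin_numE ?transient_p // -sumEFin.
by apply: nneseries_lim_ge => t _ _; rewrite lee_fin.
Qed.

(* Otherwise the chain started at [j] never leaves the exit-free states, so it
   spends one unit of occupation in [S] at every time, against transience. *)
Lemma sink_reachable j : exists k, 0 < Bpow pexp d k (bexit pexp d) j.
Proof.
have [//|unreach] := pselect (exists k, 0 < Bpow pexp d k (bexit pexp d) j).
exfalso.
have fj : exit_free j.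
  move=> k; apply/eqP; rewrite eq_le (Bpow_ge0 _ pexp_ge0) ?andbT; last first.
    exact: bexit_ge0 _ pexp_ge0 d.
  by rewrite leNgt; apply/negP => pos; apply: unreach; exists k.
have [C CB] := occ_partial_sums_bounded j.
pose N := (Num.truncn C).+1.
have : N%:R <= C.
  apply: le_trans (CB N); rewrite -[X in X%:R]subn0 -sumr_const_nat.
  by apply: ler_sum => t _; apply: sum_occ_exit_free fj.
by rewrite leNgt truncnS_gt.
Qed.

End Reachability.

Lemma Lop_det_rule d w s : Lop p r beta (det_rule R d) w s = - Tpol pexp d (- w) s.
Proof.
have -> : Lop p r beta (det_rule R d) w s = Bop pexp d w s - bexit pexp d s.
  rewrite /Lop /bvec /det_rule sum_det_rule; congr (_ - _).
  by apply: eq_bigr => s' _; rewrite /Bmat sum_det_rule.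
by rewrite /Tpol BopN fctE opprD opprK addrC.
Qed.

Section InfiniteHorizon.
Variable a0 : A.
Hypothesis winf_opt_gtNy : forall s, (-oo < winf_opt p r beta s)%E.
Hypothesis transient_p : transient p.
Local Open Scope classical_set_scope.

Lemma winf_optE s :
  winf_opt p r beta s = limn_einf (fun t => (- iter t (Topt pexp a0) (cst 1) s)%:E).
Proof. by rewrite /winf_opt; congr limn_einf; apply: funext => t; rewrite (wt_opt_iter a0). Qed.

Lemma iter_Topt0_bounded s : has_ubound (range (fun t => iter t (Topt pexp a0) 0 s)).
Proof.
have [M lbM] : exists M, \forall t \near \oo, M <= - iter t (Topt pexp a0) (cst 1) s.
  by apply: limn_einf_gtNy; rewrite -winf_optE.
apply: (has_ubound_iter_Topt0 _ pexp_ge0 a0 (cst 1) s (- M)) => [s'|]; first exact: ler01.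
by apply: filterS lbM => t; rewrite lerNr.
Qed.

Lemma winf_opt_lfp s : winf_opt p r beta s = (- lfp pexp a0 s)%:E.
Proof.
rewrite winf_optE; apply: limn_einf_EFin; apply: cvgN.
apply: (iter_Topt_cvg _ pexp_ge0 _ iter_Topt0_bounded (sink_reachable^~ transient_p)) => s'.
exact: ler01.
Qed.

Lemma winf_greedy_lfp s :
  winf p r beta (stationary (greedy pexp a0 (lfp pexp a0))) s = (- lfp pexp a0 s)%:E.
Proof.
rewrite /winf; under eq_fun do rewrite wt_ret_mgf ret_mgf_stationary.
apply: limn_einf_EFin; apply: cvgN.
exact: (iter_Tpol_greedy_cvg _ pexp_ge0 _ iter_Topt0_bounded (sink_reachable^~ transient_p)).
Qed.

End InfiniteHorizon.

End MDP.

Theorem theorem2 (R : realType) (S A : finType) (hA : (0 < #|A|)%N)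
  (p r : S -> A -> option S -> R) (beta : R) (mu : S -> R)
  (hbeta : 0 < beta)
  (hp0 : forall s a s', 0 <= p s a s')
  (hp1 : forall s a, \sum_(s' : option S) p s a s' = 1)
  (hmu : forall s, 0 < mu s) (hmu1 : \sum_(s : S) mu s = 1)
  (htrans : transient p)
  (hfin : forall s, (-oo < winf_opt p r beta s)%E) :
  exists dstar : S -> A,
    let wstar := fun s => fine (winf_opt p r beta s) in
    (forall s, winf_opt p r beta s = winf p r beta (stationary dstar) s) /\
    (forall s, winf_opt p r beta s = (Lop p r beta (det_rule R dstar) wstar s)%:E) /\
    (forall w : S -> R, (forall s, w s = Lop p r beta (det_rule R dstar) w s) ->
       forall s, (w s)%:E = winf_opt p r beta s).
Proof.
have /card_gt0P [a0 _] := hA.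
pose K := pexp p r beta.
have K_ge0 := pexp_ge0 p r beta hp0.
have bounded := iter_Topt0_bounded p r beta hbeta hp0 hp1 a0 hfin.
have reach d := sink_reachable p r beta hp0 hp1 d htrans.
have winf_optE := winf_opt_lfp p r beta hbeta hp0 hp1 a0 hfin htrans.
exists (greedy K a0 (lfp K a0)) => wstar.
have wstarE : wstar = - lfp K a0 by apply: funext => s; rewrite /wstar winf_optE.
split; [|split] => [s|s|w w_fix s].
- by rewrite winf_optE (winf_greedy_lfp p r beta hbeta hp0 hp1 a0 hfin htrans).
- by rewrite winf_optE Lop_det_rule wstarE opprK (Tpol_greedy_lfp _ K_ge0 _ bounded).
- rewrite winf_optE -(Tpol_greedy_fix_unique _ K_ge0 _ bounded reach (- w)) ?opprK //.
  by apply: funext => s'; rewrite [in RHS]fctE [in RHS]w_fix Lop_det_rule opprK.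
Qed.
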